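(* Let $P_n$ be a labeled path with ad-pattern $w=w_1\cdots w_{n-1}$. Suppose that at least one of the following holds: (i) $RT(P_n)$ contains a $(1,1,3)$ sub-ribbon, i.e. $w$ contains $ddaa$ as a factor (consecutive letters); (ii) $RT(P_n)$ begins with a $(1,3)$ sub-ribbon, i.e. $w$ begins with $daa$; (iii) $RT(P_n)$ ends with a $(1,1,2)$ sub-ribbon, i.e. $w$ ends with $dda$. Then $X(P_n;\mathbf{x},q)$ is not symmetric.
   Context: A labeled path $P_n$ is the path graph with vertices $v_1,\dots,v_n$ (edges $v_iv_{i+1}$) where $v_i$ carries label $\sigma_i$ for a permutation $\sigma$ of $[n]$; vertices are identified with labels. A proper coloring is $c\colon[n]\to\{1,2,\dots\}$ with adjacent vertices colored differently; $\operatorname{asc}(c)=\#\{ij\in E: i<j,\ c(i)<c(j)\}$. The CQF is $X(P_n;\mathbf{x},q)=\sum_{c \text{ proper}} x_{c(1)}\cdots x_{c(n)}q^{\operatorname{asc}(c)}$; it is symmetric if each coefficient of $q^k$ is a symmetric function. The ad-pattern of $P_n$ is $w_1\cdots w_{n-1}$ with $w_i=a$ if $\sigma_i<\sigma_{i+1}$ and $w_i=d$ otherwise. The ribbon diagram $RT(P_n)$: start with box $1$, and for $i=1,\dots,n-1$ place box $i+1$ immediately right of box $i$ if $w_i=a$ and immediately above box $i$ if $w_i=d$. A $\beta$ sub-ribbon is a set of consecutive boxes whose shape is the ribbon with row lengths $\beta$ (bottom to top); a $(1,1,3)$ shape is a vertical column of three boxes whose top box is the leftmost of a row of three boxes. 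*)

From mathcomp Require Import all_boot all_fingroup.
Set Implicit Arguments. Unset Strict Implicit. Unset Printing Implicit Defensive.

(* Labels are 0..n-1 (order-preserving shift of 1..n).  A labeled path is given
   by sigma : 'S_n ; vertex v_(i+1) carries label sigma i. *)

Definition path_labels n (sigma : 'S_n) : seq 'I_n := [seq sigma i | i <- enum 'I_n].

Definition path_edges n (sigma : 'S_n) : seq ('I_n * 'I_n) :=
  zip (path_labels sigma) (behead (path_labels sigma)).

Definition la : bool := true.
Definition ld : bool := false.
Definition ad_pattern n (sigma : 'S_n) : seq bool :=
  [seq (val p.1 < val p.2)%N | p <- path_edges sigma].

(* Colorings with colors 0..m-1 (color j stands for the variable x_(j+1)). *)
Definition proper n m (sigma : 'S_n) (c : {ffun 'I_n -> 'I_m}) : bool :=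
  all (fun p => c p.1 != c p.2) (path_edges sigma).

Definition asc n m (sigma : 'S_n) (c : {ffun 'I_n -> 'I_m}) : nat :=
  count (fun p => ((val p.1 < val p.2) && (val (c p.1) < val (c p.2)))
               || ((val p.2 < val p.1) && (val (c p.2) < val (c p.1))))%N
        (path_edges sigma).

(* Coefficient of q^k x_1^(alpha_1) ... x_m^(alpha_m) in X(P_n; x, q),
   where m = size alpha: the number of proper colorings with exactly
   alpha_j vertices of color j and with k ascents. *)
Definition cqf_coef n (sigma : 'S_n) (k : nat) (alpha : seq nat) : nat :=
  #|[set c : {ffun 'I_n -> 'I_(size alpha)} |
      [&& proper sigma c, asc sigma c == k &
          [forall j : 'I_(size alpha), #|[set v | c v == j]| == nth 0%N alpha j]]]|.

Definition perm_exps (alpha : seq nat) (s : 'S_(size alpha)) : seq nat :=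
  [seq nth 0%N alpha (s j) | j <- enum 'I_(size alpha)].

Definition cqf_symmetric n (sigma : 'S_n) : Prop :=
  forall (k : nat) (alpha : seq nat) (s : 'S_(size alpha)),
    cqf_coef sigma k (perm_exps s) = cqf_coef sigma k alpha.

From Pilot Require Import Defs.
From mathcomp Require Import all_boot all_fingroup zify.
Set Implicit Arguments. Unset Strict Implicit. Unset Printing Implicit Defensive.

(* Look at the coefficient of q^(n-1).  A colouring with n-1 ascents is one
   whose colours, read along the path, rise at every letter a and fall at
   every letter d of the ad-pattern, so it can give the smallest colour only
   to valleys of the pattern.  Each hypothesis provides a valley u inside a
   window d d a a (whose outer letters may fall off the ends of the word).
   Starting from the canonical height function of the pattern, shifted up by
   one, and lowering u to 0 and its two neighbours to 1 gives such a colouring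
   in which the second colour is used by every other valley and by both
   neighbours of u, i.e. more often than there are valleys.  Exchanging x_1
   and x_2 in its monomial thus gives a monomial with coefficient 0. *)

Section UpDownPattern.

Variables (W : nat -> bool) (N : nat).

Definition follows (f : nat -> nat) : Prop :=
  forall j, j < N -> if W j then f j < f j.+1 else f j.+1 < f j.

(* The number of letters a just before position j, resp. of letters d just
   after it. *)
Definition ascent_run (j : nat) : nat := find negb (rev (map W (iota 0 j))).

Definition descent_run (j : nat) : nat := find id (map W (iota j (N - j))).

Definition height (j : nat) : nat := maxn (ascent_run j) (descent_run j).

Lemma ascent_runS j : ascent_run j.+1 = if W j then (ascent_run j).+1 else 0.
Proof. by rewrite /ascent_run -addn1 iotaD map_cat rev_cat add0n /=; case: (W j). Qed.

Lemma descent_run_step j : j < N ->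
  descent_run j = if W j then 0 else (descent_run j.+1).+1.
Proof.
by move=> ltjN; rewrite /descent_run -(subnSK ltjN) /=; case: (W j).
Qed.

Lemma height_le j : j <= N -> height j <= N.
Proof.
move=> lejN; rewrite geq_max /ascent_run /descent_run.
rewrite (leq_trans (find_size _ _)) ?size_rev ?size_map ?size_iota //.
by rewrite (leq_trans (find_size _ _)) ?size_map ?size_iota ?leq_subr.
Qed.

Lemma height_follows : follows height.
Proof.
move=> j ltjN; rewrite /height ascent_runS (descent_run_step ltjN).
by case: (W j); rewrite ?maxn0 ?max0n leq_max leqnn ?orbT.
Qed.

Lemma follows_height_eq0 f j : follows f -> j <= N -> f j = 0 -> height j = 0.
Proof.
move=> Ff lejN fj0; apply/eqP; rewrite -leqn0 geq_max; apply/andP; split.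
  case: j lejN fj0 => [|i] // ltiN fi0; rewrite ascent_runS.
  by have := Ff i ltiN; rewrite fi0; case: (W i).
have [ltjN|leNj] := ltnP j N; last by rewrite /descent_run (eqP leNj).
by rewrite (descent_run_step ltjN); have := Ff j ltjN; rewrite fj0; case: (W j).
Qed.

Definition pinched_height (u j : nat) : nat :=
  if j == u then 0 else if (j == u.-1) || (j == u.+1) then 1 else (height j).+1.

Definition pinchable (u : nat) : Prop :=
  [/\ ~~ W u.-1, W u, u < N, (u == 1) || ~~ W (u - 2) & (u.+1 == N) || W u.+1].

Lemma pinchable_gt0 u : pinchable u -> 0 < u.
Proof. by case: u => // -[/negP]. Qed.

Lemma pinched_height_far u j : j != u.-1 -> j != u -> j != u.+1 ->
  pinched_height u j = (height j).+1.
Proof. by rewrite /pinched_height => /negbTE-> /negbTE-> /negbTE->. Qed.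

Lemma pinched_height_lt u j : j <= N -> pinched_height u j < N.+2.
Proof.
by move=> lejN; rewrite /pinched_height; do 2?case: ifP => //; rewrite !ltnS height_le.
Qed.

Lemma pinched_height_center u : pinched_height u u = 0.
Proof. by rewrite /pinched_height eqxx. Qed.

Lemma pinched_height_pred u : 0 < u -> pinched_height u u.-1 = 1.
Proof. by move=> u_gt0; rewrite /pinched_height eqxx ifN //; lia. Qed.

Lemma pinched_height_succ u : pinched_height u u.+1 = 1.
Proof. by rewrite /pinched_height eqxx orbT ifN //; lia. Qed.

Lemma pinched_height_follows u : pinchable u -> follows (pinched_height u).
Proof.
case=> nWu1 Wu _ Wu2 Wu3 j ltjN.
have Hj := height_follows ltjN.
have [far|] := boolP ((j.+2 < u) || (u.+1 < j)).
  rewrite !pinched_height_far; try lia.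
  by case: (W j) Hj.
rewrite negb_or -!leqNgt => /andP[le_u_j2 le_j_u1].
have : [|| j.+2 == u, j.+1 == u, j == u | j == u.+1] by lia.
case/or4P => /eqP ju; rewrite -ju in nWu1 Wu Wu2 Wu3 *.
- rewrite /= subn2 in Wu2; rewrite (negbTE Wu2) in Hj *.
  by rewrite pinched_height_pred // pinched_height_far; lia.
- by rewrite (negbTE nWu1) pinched_height_center pinched_height_pred.
- by rewrite Wu pinched_height_center pinched_height_succ.
- have Wj : W j by case/orP: Wu3 => // /eqP; lia.
  rewrite Wj ju in Hj *.
  by rewrite pinched_height_succ pinched_height_far; lia.
Qed.

Lemma card_height_eq0_lt u : pinchable u ->
  #|[set i : 'I_N.+1 | height i == 0]| < #|[set i : 'I_N.+1 | pinched_height u i == 1]|.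
Proof.
move=> pu; have u_gt0 := pinchable_gt0 pu; case: (pu) => nWu1 Wu ltuN _ _.
set A := [set i : 'I_N.+1 | height i == 0].
pose ou : 'I_N.+1 := inord u; pose om : 'I_N.+1 := inord u.-1.
pose op : 'I_N.+1 := inord u.+1.
have [ou_u om_u op_u] : [/\ ou = u :> nat, om = u.-1 :> nat & op = u.+1 :> nat].
  by split; rewrite /= inordK //; lia.
have height_u : height u = 0.
  by apply: (follows_height_eq0 (pinched_height_follows pu)) (pinched_height_center u); lia.
have height_pred : height u.-1 != 0.
  by have := height_follows (_ : u.-1 < N); rewrite (negbTE nWu1) prednK //; lia.
have height_succ : height u.+1 != 0.
  by have := height_follows ltuN; rewrite Wu; lia.
have sub : om |: (op |: (A :\ ou)) \subset [set i : 'I_N.+1 | pinched_height u i == 1].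
  apply/subsetP => i; rewrite !inE -!val_eqE /= om_u op_u ou_u.
  case/or3P => [/eqP->|/eqP->|/andP[iu /eqP hi0]].
  - by rewrite pinched_height_pred.
  - by rewrite pinched_height_succ.
  - by rewrite /pinched_height (negbTE iu) hi0; case: ifP.
apply: leq_trans (subset_leq_card sub); rewrite !cardsU1 (cardsD1 ou A) !inE.
rewrite -!val_eqE /= om_u op_u ou_u height_u (negbTE height_pred) (negbTE height_succ).
by rewrite !andbF orbF eqxx ltn_eqF //; lia.
Qed.

Lemma nth_pattern_cat p t p' : map W (iota 0 N) = p ++ t ++ p' ->
  forall k, k < size t -> W (size p + k) = nth false t k.
Proof.
move=> Ws k ltkt; have ltN : size p + k < N.
  by rewrite -(size_iota 0 N) -(size_map W) Ws !size_cat; lia.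
rewrite -[size p + k]add0n -(nth_iota 0 0 ltN) -(nth_map 0 false) ?size_iota //.
by rewrite Ws nth_cat ltnNge leq_addr addKn /= nth_cat ltkt.
Qed.

Lemma pinchable_of_pattern :
  [\/ infix [:: ld; ld; la; la] (map W (iota 0 N)),
      prefix [:: ld; la; la] (map W (iota 0 N))
    | suffix [:: ld; ld; la] (map W (iota 0 N))] -> exists u, pinchable u.
Proof.
have sizeW s : map W (iota 0 N) = s -> N = size s by move <-; rewrite size_map size_iota.
case=> [/infixP[p [p' Ws]] | /prefixP[p' Ws] | /suffixP[p Ws]].
- have Wp := nth_pattern_cat Ws; have := sizeW _ Ws; rewrite !size_cat /= => sizeN.
  exists (size p).+2; split => /=.
  + by rewrite -addn1 Wp.
  + by rewrite -addn2 Wp.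
  + lia.
  + by rewrite subn2 -[size p]addn0 Wp.
  + by rewrite -addn3 Wp ?orbT.
- have Wp := nth_pattern_cat (p := [::]) Ws; have := sizeW _ Ws; rewrite size_cat /= => sizeN.
  exists 1; split => //.
  + by rewrite (Wp 0).
  + by rewrite (Wp 1).
  + lia.
  + by rewrite (Wp 2) ?orbT.
- have := sizeW _ Ws; rewrite size_cat /= => sizeN.
  rewrite -(cats0 [:: _; _; _]) in Ws; have Wp := nth_pattern_cat Ws.
  exists (size p).+2; split => /=.
  + by rewrite -addn1 Wp.
  + by rewrite -addn2 Wp.
  + lia.
  + by rewrite subn2 -[size p]addn0 Wp.
  + by rewrite sizeN addn3 eqxx.
Qed.

End UpDownPattern.

Lemma card_set_perm (T : finType) (s : {perm T}) (P : pred T) :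
  #|[set x | P (s x)]| = #|[set x | P x]|.
Proof.
by rewrite -(card_preimset [set x | P x] (@perm_inj _ s)); apply: eq_card => x; rewrite !inE.
Qed.

Lemma nth_perm_exps alpha (s : 'S_(size alpha)) (j : 'I_(size alpha)) :
  nth 0 (perm_exps s) j = nth 0 alpha (s j).
Proof. by rewrite /perm_exps (nth_map j) ?size_enum_ord // nth_ord_enum. Qed.

Lemma zip_behead_map_iota (T : Type) (f : nat -> T) i k :
  zip (map f (iota i k.+1)) (behead (map f (iota i k.+1))) =
  [seq (f j, f j.+1) | j <- iota i k].
Proof. by elim: k i => [|k IHk] i //=; rewrite -IHk. Qed.

Section LabeledPath.

Variables (N : nat) (sigma : 'S_N.+1).

Definition vertex_at (j : nat) : 'I_N.+1 := sigma (inord j).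

Definition ascent_at (j : nat) : bool := vertex_at j < vertex_at j.+1.

Definition position (v : 'I_N.+1) : nat := (sigma^-1)%g v.

Lemma vertex_at_position v : vertex_at (position v) = v.
Proof. by rewrite /vertex_at /position inord_val permKV. Qed.

Lemma position_vertex_at j : j <= N -> position (vertex_at j) = j.
Proof. by move=> lejN; rewrite /position /vertex_at permK inordK. Qed.

Lemma position_le v : position v <= N.
Proof. by rewrite -ltnS ltn_ord. Qed.

Lemma path_edges_at :
  path_edges sigma = [seq (vertex_at j, vertex_at j.+1) | j <- iota 0 N].
Proof.
have labels : path_labels sigma = map vertex_at (iota 0 N.+1).
  rewrite /path_labels -val_enum_ord -map_comp.
  by apply: eq_map => i /=; rewrite /vertex_at inord_val.
by rewrite /path_edges labels zip_behead_map_iota.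
Qed.

Lemma ad_pattern_at : ad_pattern sigma = map ascent_at (iota 0 N).
Proof. by rewrite /ad_pattern path_edges_at -map_comp. Qed.

Definition color_along m (c : {ffun 'I_N.+1 -> 'I_m}) (j : nat) : nat := c (vertex_at j).

Lemma vertex_at_neq j : j < N -> vertex_at j != vertex_at j.+1.
Proof.
move=> ltjN; rewrite (inj_eq perm_inj) -val_eqE /= !inordK //; lia.
Qed.

Lemma asc_along m (c : {ffun 'I_N.+1 -> 'I_m}) :
  asc sigma c = count (fun j => if ascent_at j then color_along c j < color_along c j.+1
                                else color_along c j.+1 < color_along c j) (iota 0 N).
Proof.
rewrite /asc path_edges_at count_map; apply: eq_in_count => j.
rewrite mem_iota /= => /vertex_at_neq; rewrite /ascent_at -val_eqE /=.
by case: ltngtP; rewrite ?orbF.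
Qed.

Lemma asc_eq_full m (c : {ffun 'I_N.+1 -> 'I_m}) :
  asc sigma c = N <-> follows ascent_at N (color_along c).
Proof.
rewrite asc_along -[in X in _ = X](size_iota 0 N); split => [/eqP|F].
  by rewrite -all_count => /allP F j ltjN; apply: F; rewrite mem_iota.
by apply/eqP; rewrite -all_count; apply/allP => j; rewrite mem_iota => /F.
Qed.

Lemma follows_proper m (c : {ffun 'I_N.+1 -> 'I_m}) :
  follows ascent_at N (color_along c) -> Defs.proper sigma c.
Proof.
move=> F; rewrite /Defs.proper path_edges_at all_map; apply/allP => j.
rewrite mem_iota /= -val_eqE /= neq_ltn => /F; rewrite /color_along.
by case: ascent_at => ->; rewrite ?orbT.
Qed.

Lemma cqf_coef_gt0 M (f : nat -> nat) :
  follows ascent_at N f -> (forall j, j <= N -> f j < M) ->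
  0 < cqf_coef sigma N [seq #|[set i : 'I_N.+1 | f i == k]| | k <- iota 0 M].
Proof.
move=> Ff ltfM; set alpha := [seq _ | k <- _].
have size_alpha : size alpha = M by rewrite size_map size_iota.
have lt_alpha v : f (position v) < size alpha by rewrite size_alpha ltfM ?position_le.
pose c : {ffun 'I_N.+1 -> 'I_(size alpha)} := [ffun v => Ordinal (lt_alpha v)].
have Fc : follows ascent_at N (color_along c).
  move=> j ltjN; rewrite /color_along !ffunE /= !position_vertex_at //; last exact: ltnW.
  exact: Ff.
apply/card_gt0P; exists c; rewrite inE follows_proper // (proj2 (asc_eq_full c) Fc) eqxx /=.
apply/forallP => k; rewrite (nth_map 0) ?nth_iota ?size_iota -?size_alpha //.
rewrite -(card_set_perm (sigma^-1)%g (fun i => f i == k)); apply/eqP/eq_card => v.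
by rewrite !inE ffunE -val_eqE.
Qed.

Lemma cqf_coef_eq0 alpha :
  #|[set i : 'I_N.+1 | height ascent_at N i == 0]| < nth 0 alpha 0 ->
  cqf_coef sigma N alpha = 0.
Proof.
move=> lt_alpha0; have alpha_gt0 : 0 < size alpha by case: alpha lt_alpha0.
apply/eqP; rewrite cards_eq0; apply/eqP/setP => c; rewrite !inE.
apply/negP => /and3P[_ /eqP/asc_eq_full Fc /forallP count_c].
have /eqP count0 := count_c (Ordinal alpha_gt0).
have sub : [set v | c v == Ordinal alpha_gt0] \subset
           [set v : 'I_N.+1 | height ascent_at N (position v) == 0].
  apply/subsetP => v; rewrite !inE -val_eqE /= => /eqP cv0.
  by rewrite (follows_height_eq0 Fc (position_le v)) // /color_along vertex_at_position.
have := subset_leq_card sub; rewrite count0 leqNgt.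
by rewrite (card_set_perm _ (fun i : 'I_N.+1 => height ascent_at N i == 0)) lt_alpha0.
Qed.

End LabeledPath.

Theorem proposition4p5 (n : nat) (sigma : 'S_n) :
  [\/ infix [:: ld; ld; la; la] (ad_pattern sigma),
      prefix [:: ld; la; la] (ad_pattern sigma)
    | suffix [:: ld; ld; la] (ad_pattern sigma)] ->
  ~ cqf_symmetric sigma.
Proof.
case: n sigma => [|N] sigma.
  by rewrite /ad_pattern /path_edges /path_labels enum_ord0; case.
rewrite ad_pattern_at => /pinchable_of_pattern[u pu] symmetric.
pose g := pinched_height (ascent_at sigma) N u.
pose alpha := [seq #|[set i : 'I_N.+1 | g i == k]| | k <- iota 0 N.+2].
have alpha_gt1 : 1 < size alpha by rewrite size_map size_iota.
pose swap01 := tperm (Ordinal (ltnW alpha_gt1)) (Ordinal alpha_gt1).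
have := cqf_coef_gt0 (pinched_height_follows pu) (@pinched_height_lt _ _ u).
rewrite -(symmetric N alpha swap01) cqf_coef_eq0 //.
rewrite (nth_perm_exps _ (Ordinal (ltnW alpha_gt1))) tpermL (nth_map 0) ?nth_iota //.
exact: card_height_eq0_lt.
Qed.
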